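(* Let $\mathbf v\in\mathbb R^{n\times m}_{<0}$, $\mathbf b\in\mathbb R^n_{<0}$, and let $\mathbf z$ be an allocation. The following are equivalent: (1) $\mathbf z$ is competitive for $(\mathbf v,\mathbf b)$; (2) $\mathbf u(\mathbf z)\in\mathbb R^n_{<0}$ and $z_{i,j}>0$ implies $\frac{v_{i,j}b_i}{u_i(\mathbf z_i)}\ge\frac{v_{i',j}b_{i'}}{u_{i'}(\mathbf z_{i'})}$ for all $i'\in[n]$; (3) $\mathbf u(\mathbf z)\in\mathbb R^n_{<0}$ and $\mathbf y=\mathbf z$ maximizes $W_\tau(\mathbf y)=\sum_i\tau_iu_i(\mathbf y_i)$ over all allocations $\mathbf y$, where $\tau_i=b_i/u_i(\mathbf z_i)$; (4) $\mathbf u(\mathbf z)\in\mathbb R^n_{<0}$, $\mathbf u(\mathbf z)$ lies on the Pareto frontier $\mathcal U^*(\mathbf v)$, and $\mathbf u(\mathbf z)$ is a critical point of the Nash product $\mathcal N_{\mathbf b}(\mathbf u)=\prod_i|u_i|^{|b_i|}$ on $\mathcal U(\mathbf v)$.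
   Context: Agents $[n]$, chores $[m]$, allocations $\mathbf z\in\mathbb R^{n\times m}_{\ge0}$ with column sums $1$; $u_i(\mathbf z_i)=\sum_jv_{i,j}z_{i,j}$, $\mathbf u(\mathbf z)=(u_i(\mathbf z_i))_i$; $\mathcal U(\mathbf v)=\{\mathbf u(\mathbf z):\mathbf z\text{ allocation}\}$ and $\mathcal U^*(\mathbf v)$ the set of utility profiles of Pareto optimal allocations. $\mathbf z$ is competitive for $(\mathbf v,\mathbf b)$ if there exist prices $\mathbf p\in\mathbb R^m_{<0}$ such that each $\mathbf z_i$ maximizes $u_i$ over bundles $\mathbf x\in\mathbb R^m_{\ge0}$ with $\sum_jp_jx_j\le b_i$. A point $\mathbf u\in\mathcal U(\mathbf v)\cap\mathbb R^n_{<0}$ is a critical point of a smooth function $f$ on the convex set $\mathcal U(\mathbf v)$ if the tangent hyperplane at $\mathbf u$ to the level set of $f$ through $\mathbf u$ is a supporting hyperplane of $\mathcal U(\mathbf v)$. *)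

From Stdlib Require Import Reals Lra Lia Arith.
Open Scope R_scope.

(* Vectors/matrices are functions on nat; only indices i < n, j < m matter. *)

Fixpoint sumR (n : nat) (f : nat -> R) : R :=
  match n with
  | O => 0
  | S k => sumR k f + f k
  end.

Fixpoint prodR (n : nat) (f : nat -> R) : R :=
  match n with
  | O => 1
  | S k => prodR k f * f k
  end.

(* z : agent -> chore -> share is an allocation of m chores among n agents *)
Definition allocation (n m : nat) (z : nat -> nat -> R) : Prop :=
  (forall i j, (i < n)%nat -> (j < m)%nat -> 0 <= z i j) /\
  (forall j, (j < m)%nat -> sumR n (fun i => z i j) = 1).

Definition util (m : nat) (v : nat -> nat -> R) (i : nat) (x : nat -> R) : R :=
  sumR m (fun j => v i j * x j).

Definition uprof (m : nat) (v : nat -> nat -> R) (z : nat -> nat -> R) : nat -> R :=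
  fun i => util m v i (z i).

(* U(v): utility profiles of allocations (compared on the first n coordinates) *)
Definition Uset (n m : nat) (v : nat -> nat -> R) (w : nat -> R) : Prop :=
  exists y, allocation n m y /\ forall i, (i < n)%nat -> w i = uprof m v y i.

Definition pareto_optimal (n m : nat) (v : nat -> nat -> R) (z : nat -> nat -> R) : Prop :=
  allocation n m z /\
  ~ (exists y, allocation n m y /\
       (forall i, (i < n)%nat -> uprof m v z i <= uprof m v y i) /\
       (exists i, (i < n)%nat /\ uprof m v z i < uprof m v y i)).

Definition Ustar (n m : nat) (v : nat -> nat -> R) (w : nat -> R) : Prop :=
  exists y, pareto_optimal n m v y /\ forall i, (i < n)%nat -> w i = uprof m v y i.

Definition in_budget (m : nat) (p : nat -> R) (bi : R) (x : nat -> R) : Prop :=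
  (forall j, (j < m)%nat -> 0 <= x j) /\ sumR m (fun j => p j * x j) <= bi.

Definition competitive (n m : nat) (v : nat -> nat -> R) (b : nat -> R)
    (z : nat -> nat -> R) : Prop :=
  exists p : nat -> R,
    (forall j, (j < m)%nat -> p j < 0) /\
    forall i, (i < n)%nat ->
      in_budget m p (b i) (z i) /\
      forall x, in_budget m p (b i) x -> util m v i x <= util m v i (z i).

Definition upd (u : nat -> R) (i : nat) (t : R) : nat -> R :=
  fun k => if Nat.eqb k i then t else u k.

Definition nash (n : nat) (b : nat -> R) (u : nat -> R) : R :=
  prodR n (fun i => Rpower (Rabs (u i)) (Rabs (b i))).

(* u in S ∩ R^n_{<0} is a critical point of f on S: the tangent hyperplane
   {x | grad f(u) . (x - u) = 0} at u of the level set of f through u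
   (grad f(u) given by partial derivatives, and nonzero so the tangent
   hyperplane is defined) is a supporting hyperplane of S. *)
Definition critical_point (n : nat) (f : (nat -> R) -> R) (S : (nat -> R) -> Prop)
    (u : nat -> R) : Prop :=
  S u /\ (forall i, (i < n)%nat -> u i < 0) /\
  exists g : nat -> R,
    (forall i, (i < n)%nat -> derivable_pt_lim (fun t => f (upd u i t)) (u i) (g i)) /\
    (exists i, (i < n)%nat /\ g i <> 0) /\
    ((forall w, S w -> sumR n (fun i => g i * (w i - u i)) <= 0) \/
     (forall w, S w -> sumR n (fun i => g i * (w i - u i)) >= 0)).

From Stdlib Require Import Reals Lra Lia List RList FunctionalExtensionality.
Open Scope R_scope.

(* With tau_i = b_i / u_i(z) (the "budget weights"), all four
   conditions reduce to one combinatorial property, [max_weight_support]: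
   a chore j is only assigned to agents maximizing the weighted disutility
   tau_i * v_ij.
   - This property is equivalent to the existence of negative prices
     p_j = max_i tau_i v_ij that bound every tau_i v_ij and are met on the
     support of z; such prices make z competitive, and conversely the prices
     of a competitive allocation have this form (test bundles consisting of a
     single chore), which gives (1) <-> (2).
   - The same prices certify that z maximizes the weighted welfare W_tau,
     while a maximizer of W_tau cannot gain from moving a chore to another
     agent; this gives (2) <-> (3).
   - The gradient of the Nash product at u(z) is -N * tau, so critical points
     are exactly the maximizers or minimizers of W_tau; a minimizer that is
     Pareto optimal still has the support property (otherwise a bilateral swap
     of chores is a Pareto improvement), which gives (3) <-> (4). *)

Lemma sumR_ext n f g : (forall k, (k < n)%nat -> f k = g k) -> sumR n f = sumR n g.
Proof.
  induction n; simpl; intros H; auto.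
  rewrite IHn by (intros; apply H; lia). rewrite H by lia. reflexivity.
Qed.

Lemma sumR_zero n : sumR n (fun _ => 0) = 0.
Proof. induction n; simpl; [reflexivity | rewrite IHn; ring]. Qed.

Lemma sumR_plus n f g : sumR n (fun k => f k + g k) = sumR n f + sumR n g.
Proof. induction n; simpl; [ring | rewrite IHn; ring]. Qed.

Lemma sumR_scal n c f : sumR n (fun k => c * f k) = c * sumR n f.
Proof. induction n; simpl; [ring | rewrite IHn; ring]. Qed.

Lemma sumR_exchange n m F :
  sumR n (fun i => sumR m (fun j => F i j)) = sumR m (fun j => sumR n (fun i => F i j)).
Proof.
  induction n; simpl.
  - symmetry. apply sumR_zero.
  - rewrite IHn. symmetry. apply (sumR_plus m (fun j => sumR n (fun i => F i j))).
Qed.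

Lemma sumR_le n f g : (forall k, (k < n)%nat -> f k <= g k) -> sumR n f <= sumR n g.
Proof.
  induction n; simpl; intros H; [lra|].
  assert (sumR n f <= sumR n g) by (apply IHn; intros; apply H; lia).
  assert (f n <= g n) by (apply H; lia). lra.
Qed.

Lemma sumR_lt n f g : (forall k, (k < n)%nat -> f k <= g k) ->
  (exists k, (k < n)%nat /\ f k < g k) -> sumR n f < sumR n g.
Proof.
  induction n; simpl; intros H [k [Hk Hlt]]; [lia|].
  assert (f n <= g n) by (apply H; lia).
  destruct (Nat.eq_dec k n) as [->|Hkn].
  - assert (sumR n f <= sumR n g) by (apply sumR_le; intros; apply H; lia). lra.
  - assert (sumR n f < sumR n g) by (apply IHn; [intros; apply H; lia | exists k; split; [lia | auto]]).
    lra.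
Qed.

Lemma sumR_le_eq n f g : (forall k, (k < n)%nat -> f k <= g k) -> sumR n g <= sumR n f ->
  forall k, (k < n)%nat -> f k = g k.
Proof.
  intros Hle Hsum k Hk. destruct (Rle_lt_or_eq_dec _ _ (Hle k Hk)) as [Hlt|]; auto.
  assert (sumR n f < sumR n g) by (apply sumR_lt; eauto). lra.
Qed.

Lemma sumR_neg_exists n f : sumR n f < 0 -> exists k, (k < n)%nat /\ f k < 0.
Proof.
  induction n; simpl; intros H; [lra|].
  destruct (Rlt_or_le (sumR n f) 0) as [Hneg|Hnn].
  - destruct (IHn Hneg) as [k [Hk Hfk]]. exists k. split; [lia | auto].
  - exists n. split; [lia | lra].
Qed.

Definition delta (a k : nat) : R := if Nat.eqb a k then 1 else 0.

Lemma sumR_delta n f k : (k < n)%nat -> sumR n (fun a => f a * delta a k) = f k.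
Proof.
  induction n; simpl; intros Hk; [lia|]. unfold delta at 2.
  destruct (Nat.eqb_spec n k) as [->|Hnk].
  - rewrite (sumR_ext _ _ (fun _ => 0)), sumR_zero; [ring|].
    intros a Ha. unfold delta. destruct (Nat.eqb_spec a k); [lia | ring].
  - rewrite IHn by lia. ring.
Qed.

Lemma sumR_delta2 n F G H k i : (k < n)%nat -> (i < n)%nat ->
  sumR n (fun a => F a + G a * delta a k + H a * delta a i) = sumR n F + G k + H i.
Proof. intros. rewrite !sumR_plus, !sumR_delta by auto. ring. Qed.

Lemma prodR_ext n f g : (forall k, (k < n)%nat -> f k = g k) -> prodR n f = prodR n g.
Proof.
  induction n; simpl; intros H; auto.
  rewrite IHn by (intros; apply H; lia). rewrite H by lia. reflexivity.
Qed.

Lemma prodR_pos n f : (forall k, (k < n)%nat -> 0 < f k) -> 0 < prodR n f.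
Proof.
  induction n; simpl; intros H; [lra|].
  apply Rmult_lt_0_compat; [apply IHn; intros; apply H; lia | apply H; lia].
Qed.

Lemma prodR_factor n F k : (k < n)%nat ->
  prodR n F = prodR n (fun a => if Nat.eqb a k then 1 else F a) * F k.
Proof.
  induction n; simpl; intros Hk; [lia|].
  destruct (Nat.eqb_spec n k) as [->|Hnk].
  - rewrite (prodR_ext k (fun a => if Nat.eqb a k then 1 else F a) F); [ring|].
    intros a Ha. destruct (Nat.eqb_spec a k); [lia | auto].
  - rewrite IHn by lia. ring.
Qed.

Lemma nash_pos n b u : 0 < nash n b u.
Proof. unfold nash. apply prodR_pos. intros. unfold Rpower. apply exp_pos. Qed.

Lemma nash_partial_deriv n b u i : (i < n)%nat -> u i < 0 -> b i < 0 ->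
  derivable_pt_lim (fun t => nash n b (upd u i t)) (u i) (- (nash n b u * (b i / u i))).
Proof.
  intros Hi Hu Hb.
  set (C := prodR n (fun a => if Nat.eqb a i then 1 else Rpower (Rabs (u a)) (Rabs (b a)))).
  assert (Hupd : forall t, nash n b (upd u i t) = C * Rpower (Rabs t) (Rabs (b i))).
  { intros t. unfold nash. rewrite (prodR_factor n _ i Hi). unfold upd at 2. rewrite Nat.eqb_refl.
    f_equal. apply prodR_ext. intros a Ha. unfold upd. destruct (Nat.eqb a i); auto. }
  assert (Hu_abs : 0 < Rabs (u i)) by (rewrite Rabs_left; lra).
  replace (fun t => nash n b (upd u i t)) with
      (mult_real_fct C (comp (fun y => Rpower y (Rabs (b i))) Rabs))
    by (apply functional_extensionality; intros t; unfold mult_real_fct, comp; rewrite Hupd; reflexivity).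
  replace (- (nash n b u * (b i / u i))) with
     (C * (Rabs (b i) * Rpower (Rabs (u i)) (Rabs (b i) - 1) * -1)).
  - apply derivable_pt_lim_scal, derivable_pt_lim_comp;
      [apply Rabs_derive_2 | apply derivable_pt_lim_power]; auto.
  - unfold nash. rewrite (prodR_factor n _ i Hi). fold C.
    unfold Rminus. rewrite Rpower_plus, Rpower_Ropp, Rpower_1 by auto.
    rewrite (Rabs_left (u i)), (Rabs_left (b i)) by auto. field. lra.
Qed.

Section Allocations.

Variables (n m : nat) (v : nat -> nat -> R).

Hypothesis Hv : forall i j, (i < n)%nat -> (j < m)%nat -> v i j < 0.

Lemma util_neg_iff i x : (i < n)%nat -> (forall j, (j < m)%nat -> 0 <= x j) ->
  util m v i x < 0 <-> exists j, (j < m)%nat /\ 0 < x j.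
Proof.
  intros Hi Hx. unfold util. split.
  - intros Hneg. destruct (sumR_neg_exists _ _ Hneg) as [j [Hj Hvx]].
    exists j. split; auto.
    destruct (Rle_lt_or_eq_dec _ _ (Hx j Hj)) as [|Hzero]; auto.
    rewrite <- Hzero in Hvx. lra.
  - intros [j [Hj Hxj]]. rewrite <- (sumR_zero m). apply sumR_lt.
    + intros c Hc. pose proof (Hv i c Hi Hc). pose proof (Hx c Hc). nra.
    + exists j. split; auto. pose proof (Hv i j Hi Hj). nra.
Qed.

(* The bilateral exchange in which agent i hands an amount e of chore j to
   agent k, and agent k hands an amount d of chore l to agent i. *)
Definition exchange (z : nat -> nat -> R) i k j l e d : nat -> nat -> R :=
  fun a c => z a c + e * (delta a k - delta a i) * delta c j
                   + d * (delta a i - delta a k) * delta c l.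

Lemma exchange_allocation z i k j l e d :
  allocation n m z -> (i < n)%nat -> (k < n)%nat -> (j < m)%nat -> (l < m)%nat -> i <> k ->
  (j <> l \/ d = 0) -> 0 <= e <= z i j -> 0 <= d <= z k l ->
  allocation n m (exchange z i k j l e d).
Proof.
  intros [Hnn Hs] Hi Hk Hj Hl Hik Hjl He Hd. split.
  - intros a c Ha Hc. unfold exchange, delta.
    destruct (Nat.eqb_spec a k); destruct (Nat.eqb_spec a i); destruct (Nat.eqb_spec c j);
      destruct (Nat.eqb_spec c l); subst; try lia;
      try (destruct Hjl as [Hjl|Hjl]; [lia | subst]);
      specialize (Hnn _ _ Ha Hc); lra.
  - intros c Hc. unfold exchange.
    rewrite (sumR_ext _ _ (fun a => z a c + (e * delta c j - d * delta c l) * delta a k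
                                    + (d * delta c l - e * delta c j) * delta a i))
      by (intros; ring).
    rewrite sumR_delta2, Hs by auto. ring.
Qed.

Lemma exchange_uprof z i k j l e d a :
  (j < m)%nat -> (l < m)%nat ->
  uprof m v (exchange z i k j l e d) a =
  uprof m v z a + e * (delta a k - delta a i) * v a j + d * (delta a i - delta a k) * v a l.
Proof.
  intros Hj Hl. unfold uprof, util, exchange.
  rewrite (sumR_ext _ _ (fun c => v a c * z a c + (e * (delta a k - delta a i) * v a c) * delta c j
                                  + (d * (delta a i - delta a k) * v a c) * delta c l))
    by (intros; ring).
  rewrite sumR_delta2 by auto. ring.
Qed.

Definition welfare (tau : nat -> R) (y : nat -> nat -> R) : R :=
  sumR n (fun a => tau a * uprof m v y a).

Definition welfare_max (tau : nat -> R) (z : nat -> nat -> R) : Prop :=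
  forall y, allocation n m y -> welfare tau y <= welfare tau z.

Lemma welfare_by_chores tau y :
  welfare tau y = sumR m (fun j => sumR n (fun a => tau a * v a j * y a j)).
Proof.
  unfold welfare, uprof, util. rewrite <- sumR_exchange. apply sumR_ext. intros a _.
  rewrite <- sumR_scal. apply sumR_ext. intros; ring.
Qed.

Lemma welfare_opp tau y : welfare (fun a => - tau a) y = - welfare tau y.
Proof.
  unfold welfare. replace (- sumR n _) with (-1 * sumR n (fun a => tau a * uprof m v y a)) by ring.
  rewrite <- sumR_scal. apply sumR_ext. intros; ring.
Qed.

Lemma welfare_exchange tau z i k j l e d :
  (i < n)%nat -> (k < n)%nat -> (j < m)%nat -> (l < m)%nat ->
  welfare tau (exchange z i k j l e d) =
  welfare tau z + e * (tau k * v k j - tau i * v i j) + d * (tau i * v i l - tau k * v k l).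
Proof.
  intros Hi Hk Hj Hl. unfold welfare.
  rewrite (sumR_ext _ _ (fun a => tau a * uprof m v z a
     + (e * tau a * v a j - d * tau a * v a l) * delta a k
     + (d * tau a * v a l - e * tau a * v a j) * delta a i)).
  - rewrite sumR_delta2 by auto. ring.
  - intros a _. rewrite exchange_uprof by auto. ring.
Qed.

Definition max_weight_support (tau : nat -> R) (z : nat -> nat -> R) : Prop :=
  forall i j k, (i < n)%nat -> (j < m)%nat -> (k < n)%nat -> 0 < z i j ->
    tau k * v k j <= tau i * v i j.

Definition supporting_prices (tau : nat -> R) (z : nat -> nat -> R) (p : nat -> R) : Prop :=
  (forall j, (j < m)%nat -> p j < 0) /\
  (forall i j, (i < n)%nat -> (j < m)%nat -> tau i * v i j <= p j) /\
  (forall i j, (i < n)%nat -> (j < m)%nat -> tau i * v i j * z i j = p j * z i j).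

(* Slackness pins tau_i v_ij to p_j on the support, where it is maximal. *)
Lemma prices_support tau z p : supporting_prices tau z p -> max_weight_support tau z.
Proof.
  intros [_ [Hbound Hslack]] i j k Hi Hj Hk Hzij.
  assert (Hij : tau i * v i j = p j).
  { apply (Rmult_eq_reg_r (z i j)); [apply Hslack; auto | lra]. }
  rewrite Hij. apply Hbound; auto.
Qed.

Definition max_weight (tau : nat -> R) (j : nat) : R :=
  MaxRlist (map (fun a => tau a * v a j) (seq 0 n)).

Lemma max_weight_ge tau i j : (i < n)%nat -> tau i * v i j <= max_weight tau j.
Proof.
  intros Hi. apply MaxRlist_P1, in_map_iff. exists i. split; auto. apply in_seq. lia.
Qed.

Lemma max_weight_attained tau j : (0 < n)%nat ->
  exists a, (a < n)%nat /\ max_weight tau j = tau a * v a j.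
Proof.
  intros Hn. unfold max_weight.
  destruct (in_map_iff (fun a => tau a * v a j) (seq 0 n)
              (MaxRlist (map (fun a => tau a * v a j) (seq 0 n)))) as [Hin _].
  destruct Hin as [a [Ha Hseq]].
  - apply MaxRlist_P2. exists (tau 0%nat * v 0%nat j). apply in_map_iff.
    exists 0%nat. split; auto. apply in_seq. lia.
  - exists a. split; [apply in_seq in Hseq; lia | auto].
Qed.

Lemma support_prices tau z : (0 < n)%nat -> (forall i, (i < n)%nat -> 0 < tau i) ->
  allocation n m z -> max_weight_support tau z ->
  exists p, supporting_prices tau z p.
Proof.
  intros Hn Htau [Hnn _] Hsupp. exists (max_weight tau). split; [|split].
  - intros j Hj. destruct (max_weight_attained tau j Hn) as [a [Ha ->]].
    pose proof (Htau a Ha). pose proof (Hv a j Ha Hj). nra.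
  - intros i j Hi _. apply max_weight_ge; auto.
  - intros i j Hi Hj. destruct (Rle_lt_or_eq_dec _ _ (Hnn i j Hi Hj)) as [Hpos|Hzero].
    + f_equal. destruct (max_weight_attained tau j Hn) as [a [Ha Hmax]].
      apply Rle_antisym; [apply max_weight_ge; auto |].
      rewrite Hmax. apply Hsupp; auto.
    + rewrite <- Hzero. ring.
Qed.

(* Supporting prices certify that z maximizes the weighted welfare: chore j
   contributes at most p_j to any allocation, and exactly p_j to z. *)
Lemma prices_welfare_max tau z p : allocation n m z -> supporting_prices tau z p ->
  welfare_max tau z.
Proof.
  intros [_ Hs] [_ [Hbound Hslack]] y [Hynn Hys]. rewrite !welfare_by_chores.
  apply Rle_trans with (sumR m p).
  - apply sumR_le. intros j Hj.
    rewrite <- (Rmult_1_r (p j)), <- (Hys j Hj), <- sumR_scal.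
    apply sumR_le. intros a Ha.
    apply Rmult_le_compat_r; [apply Hynn | apply Hbound]; auto.
  - right. apply sumR_ext. intros j Hj.
    rewrite (sumR_ext _ _ (fun a => p j * z a j)) by (intros; apply Hslack; auto).
    rewrite sumR_scal, Hs by auto. ring.
Qed.

(* First-order condition: a welfare maximizer cannot gain by moving a chore
   from its holder to another agent. *)
Lemma welfare_max_support tau z : allocation n m z -> welfare_max tau z ->
  max_weight_support tau z.
Proof.
  intros Hz Hmax i j k Hi Hj Hk Hzij.
  destruct (Nat.eq_dec i k) as [->|Hik]; [lra|].
  assert (Hzkj : 0 <= z k j) by (apply (proj1 Hz); auto).
  assert (Hy := exchange_allocation z i k j j (z i j) 0 Hz Hi Hk Hj Hj Hik (or_intror eq_refl)).
  specialize (Hmax _ (Hy ltac:(lra) ltac:(lra))).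
  rewrite welfare_exchange in Hmax by auto.
  assert (z i j * (tau k * v k j - tau i * v i j) <= 0) by lra. nra.
Qed.

Lemma support_iff_welfare_max tau z : (0 < n)%nat -> (forall i, (i < n)%nat -> 0 < tau i) ->
  allocation n m z -> (max_weight_support tau z <-> welfare_max tau z).
Proof.
  intros Hn Htau Hz. split.
  - intros Hsupp. destruct (support_prices tau z Hn Htau Hz Hsupp) as [p Hp].
    apply (prices_welfare_max tau z p); auto.
  - apply welfare_max_support; auto.
Qed.

Definition budget_weights (b : nat -> R) (z : nat -> nat -> R) (i : nat) : R :=
  b i / uprof m v z i.

Lemma budget_weights_pos b z i : b i < 0 -> uprof m v z i < 0 ->
  0 < budget_weights b z i.
Proof. intros. apply Rdiv_neg_neg; auto. Qed.

(* In a competitive allocation every agent spends, hence receives some chore,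
   hence has negative utility. *)
Lemma competitive_util_neg b z : (forall i, (i < n)%nat -> b i < 0) -> allocation n m z ->
  competitive n m v b z -> forall i, (i < n)%nat -> uprof m v z i < 0.
Proof.
  intros Hb [Hnn _] [p [Hp Hc]] i Hi.
  destruct (Hc i Hi) as [[_ Hbudget] _].
  assert (Hspent : sumR m (fun j => p j * z i j) < 0) by (pose proof (Hb i Hi); lra).
  destruct (sumR_neg_exists _ _ Hspent) as [j [Hj Hpz]].
  apply util_neg_iff; auto. exists j. split; auto.
  pose proof (Hp j Hj). pose proof (Hnn i j Hi Hj). nra.
Qed.

(* Testing an optimal bundle x0 against the bundle spending the whole budget
   bi on chore j alone bounds the price of j from below. *)
Lemma single_chore_bound p bi i j x0 : (j < m)%nat -> p j < 0 -> bi < 0 ->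
  util m v i x0 < 0 ->
  (forall x, in_budget m p bi x -> util m v i x <= util m v i x0) ->
  v i j * (bi / util m v i x0) <= p j.
Proof.
  intros Hj Hpj Hbi Hu Hopt.
  set (x := fun c => (bi / p j) * delta c j).
  assert (Hx : in_budget m p bi x).
  { split.
    - intros c _. unfold x, delta. destruct (Nat.eqb c j); [|lra].
      pose proof (Rdiv_neg_neg bi (p j) Hbi Hpj). lra.
    - unfold x. rewrite (sumR_ext _ _ (fun c => (p c * (bi / p j)) * delta c j)) by (intros; ring).
      rewrite sumR_delta by auto. right. field. lra. }
  specialize (Hopt x Hx). unfold util at 1, x in Hopt.
  rewrite (sumR_ext _ _ (fun c => (v i c * (bi / p j)) * delta c j)) in Hopt by (intros; ring).
  rewrite sumR_delta in Hopt by auto.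
  set (U := util m v i x0) in *.
  assert (Hcross : U * p j <= v i j * bi).
  { apply (Rmult_le_compat_r (- p j)) in Hopt; [|lra].
    replace (v i j * (bi / p j) * - p j) with (- (v i j * bi)) in Hopt by (field; lra). lra. }
  apply (Rmult_le_reg_r (- U)); [lra|].
  replace (v i j * (bi / U) * - U) with (- (v i j * bi)) by (field; lra). lra.
Qed.

(* The prices of a competitive allocation support it: they bound the
   weighted disutilities by the test above, and each agent spends exactly its
   budget, which forces equality on its bundle. *)
Lemma competitive_prices b z : (forall i, (i < n)%nat -> b i < 0) -> allocation n m z ->
  competitive n m v b z -> exists p, supporting_prices (budget_weights b z) z p.
Proof.
  intros Hb Hz Hc.
  pose proof (competitive_util_neg b z Hb Hz Hc) as Hneg.
  destruct Hz as [Hnn _]. destruct Hc as [p [Hp Hopt]]. exists p.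
  assert (Hbound : forall i j, (i < n)%nat -> (j < m)%nat -> budget_weights b z i * v i j <= p j).
  { intros i j Hi Hj. rewrite Rmult_comm.
    apply (single_chore_bound p (b i) i j (z i)); auto; [apply (Hneg i Hi) | apply (Hopt i Hi)]. }
  split; [|split]; auto.
  intros i j Hi Hj. revert j Hj.
  apply sumR_le_eq.
  - intros c Hc. pose proof (Hbound i c Hi Hc). pose proof (Hnn i c Hi Hc). nra.
  - destruct (Hopt i Hi) as [[_ Hbudget] _].
    apply (Rle_trans _ _ _ Hbudget). right.
    rewrite (sumR_ext _ _ (fun c => budget_weights b z i * (v i c * z i c))) by (intros; ring).
    rewrite sumR_scal. fold (util m v i (z i)) (uprof m v z i). unfold budget_weights.
    pose proof (Hneg i Hi). field. lra.
Qed.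

(* Conversely, supporting prices make z competitive: z_i exhausts the budget,
   and on the budget set u_i(x) <= (1/tau_i) sum_j p_j x_j <= b_i / tau_i = u_i(z_i). *)
Lemma prices_competitive b z p : (forall i, (i < n)%nat -> b i < 0) -> allocation n m z ->
  (forall i, (i < n)%nat -> uprof m v z i < 0) ->
  supporting_prices (budget_weights b z) z p -> competitive n m v b z.
Proof.
  intros Hb [Hnn _] Hneg [Hp [Hbound Hslack]]. exists p. split; auto.
  intros i Hi.
  pose proof (Hneg i Hi). pose proof (Hb i Hi).
  set (t := budget_weights b z i) in *.
  assert (Ht : 0 < t) by (apply budget_weights_pos; auto).
  assert (Hspent : sumR m (fun j => p j * z i j) = b i).
  { rewrite (sumR_ext _ _ (fun j => t * (v i j * z i j))).
    - rewrite sumR_scal. fold (util m v i (z i)) (uprof m v z i).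
      unfold t, budget_weights. field. lra.
    - intros j Hj. rewrite <- Hslack by auto. unfold t. ring. }
  split; [split; [intros j Hj; apply Hnn | lra] |]; auto.
  intros x [Hx Hxb]. fold (uprof m v z i). unfold util.
  apply Rle_trans with (sumR m (fun j => / t * (p j * x j))).
  - apply sumR_le. intros j Hj. specialize (Hbound i j Hi Hj). fold t in Hbound.
    specialize (Hx j Hj).
    assert (v i j <= / t * p j).
    { apply (Rmult_le_reg_l t); auto. replace (t * (/ t * p j)) with (p j) by (field; lra). lra. }
    nra.
  - rewrite sumR_scal. apply Rle_trans with (/ t * b i).
    + apply Rmult_le_compat_l; [left; apply Rinv_0_lt_compat |]; auto.
    + right. unfold t, budget_weights. field. lra.
Qed.

Lemma competitive_iff_support b z : (0 < n)%nat -> (forall i, (i < n)%nat -> b i < 0) ->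
  allocation n m z ->
  competitive n m v b z <->
  (forall i, (i < n)%nat -> uprof m v z i < 0) /\ max_weight_support (budget_weights b z) z.
Proof.
  intros Hn Hb Hz. split.
  - intros Hc. split; [apply (competitive_util_neg b z); auto |].
    destruct (competitive_prices b z Hb Hz Hc) as [p Hp]. apply (prices_support _ _ p Hp).
  - intros [Hneg Hsupp].
    destruct (support_prices (budget_weights b z) z Hn) as [p Hp]; auto.
    { intros i Hi. apply budget_weights_pos; auto. }
    apply (prices_competitive b z p); auto.
Qed.

Lemma support_ratio_form b z :
  max_weight_support (budget_weights b z) z <->
  (forall i j, (i < n)%nat -> (j < m)%nat -> z i j > 0 ->
     forall i', (i' < n)%nat ->
       v i j * b i / uprof m v z i >= v i' j * b i' / uprof m v z i').
Proof.
  assert (Hform : forall a j, v a j * b a / uprof m v z a = budget_weights b z a * v a j)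
    by (intros; unfold budget_weights, Rdiv; ring).
  split.
  - intros Hsupp i j Hi Hj Hz i' Hi'. rewrite !Hform. apply Rle_ge, Hsupp; auto.
  - intros Hratio i j k Hi Hj Hk Hz. rewrite <- !Hform. apply Rge_le, Hratio; auto.
Qed.

Lemma competitive_iff_welfare_max b z : (0 < n)%nat -> (forall i, (i < n)%nat -> b i < 0) ->
  allocation n m z ->
  competitive n m v b z <->
  (forall i, (i < n)%nat -> uprof m v z i < 0) /\ welfare_max (budget_weights b z) z.
Proof.
  intros Hn Hb Hz. rewrite competitive_iff_support by auto.
  split; intros [Hneg Hprop]; split; auto;
    apply (support_iff_welfare_max _ z Hn); auto;
    intros i Hi; apply budget_weights_pos; auto.
Qed.

Lemma welfare_max_pareto tau z : (forall i, (i < n)%nat -> 0 < tau i) ->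
  allocation n m z -> welfare_max tau z -> pareto_optimal n m v z.
Proof.
  intros Htau Hz Hmax. split; auto. intros [y [Hy [Hle [a [Ha Hlt]]]]].
  specialize (Hmax y Hy).
  assert (welfare tau z < welfare tau y).
  { apply sumR_lt.
    - intros k Hk. apply Rmult_le_compat_l; [left |]; auto.
    - exists a. split; auto. apply Rmult_lt_compat_l; auto. }
  lra.
Qed.

Lemma pareto_of_profile z : allocation n m z -> Ustar n m v (uprof m v z) ->
  pareto_optimal n m v z.
Proof.
  intros Hz [y0 [[_ Hpo] Hsame]]. split; auto.
  intros [y [Hy [Hle [a [Ha Hlt]]]]]. apply Hpo. exists y. split; auto. split.
  - intros i Hi. rewrite <- Hsame by auto. auto.
  - exists a. rewrite <- Hsame by auto. auto.
Qed.

(* Otherwise i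
   gives e of j to k against d = e v_ij / v_il of l: i is indifferent while k
   strictly gains. *)
Lemma pareto_no_improving_swap z i k j l :
  pareto_optimal n m v z -> (i < n)%nat -> (k < n)%nat -> (j < m)%nat -> (l < m)%nat ->
  i <> k -> j <> l -> 0 < z i j -> 0 < z k l ->
  v k l * v i j <= v k j * v i l.
Proof.
  intros [Hz Hpo] Hi Hk Hj Hl Hik Hjl Hzij Hzkl.
  destruct (Rle_or_lt (v k l * v i j) (v k j * v i l)) as [|Hswap]; auto. exfalso.
  pose proof (Hv i j Hi Hj) as Hvij. pose proof (Hv i l Hi Hl) as Hvil.
  set (e := Rmin (z i j) (z k l * v i l / v i j)).
  set (d := e * v i j / v i l).
  assert (He : 0 < e).
  { apply Rmin_glb_lt; auto. apply Rdiv_neg_neg; nra. }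
  assert (Hd : 0 < d) by (apply Rdiv_neg_neg; nra).
  assert (Hdl : d <= z k l).
  { assert (Hel : e <= z k l * v i l / v i j) by apply Rmin_r.
    apply (Rmult_le_compat_r (v i j / v i l)) in Hel; [| left; apply Rdiv_neg_neg; auto].
    replace (z k l * v i l / v i j * (v i j / v i l)) with (z k l) in Hel by (field; lra).
    unfold d. replace (e * v i j / v i l) with (e * (v i j / v i l)) by (field; lra). lra. }
  assert (Hi_same : d * v i l = e * v i j) by (unfold d; field; lra).
  assert (Hk_gain : d * v k l < e * v k j).
  { unfold d. replace (e * v i j / v i l * v k l) with (e * (v k l * v i j / v i l)) by (field; lra).
    apply Rmult_lt_compat_l; auto.
    apply (Rmult_lt_reg_r (- v i l)); [lra |].
    replace (v k l * v i j / v i l * - v i l) with (- (v k l * v i j)) by (field; lra). lra. }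
  apply Hpo. exists (exchange z i k j l e d). split.
  { apply exchange_allocation; auto; split; try lra. apply Rmin_l. }
  split.
  - intros a Ha. rewrite exchange_uprof by auto. unfold delta.
    destruct (Nat.eqb_spec a k); destruct (Nat.eqb_spec a i); subst; try lia; lra.
  - exists k. split; auto. rewrite exchange_uprof by auto. unfold delta.
    rewrite Nat.eqb_refl. destruct (Nat.eqb_spec k i); [lia | lra].
Qed.

(* A Pareto optimal allocation supported on the minimal weighted disutilities
   (a welfare minimizer) is also supported on the maximal ones: a violation
   would produce an improving swap. *)
Lemma pareto_support_flip tau z : (forall i, (i < n)%nat -> 0 < tau i) ->
  (forall i, (i < n)%nat -> uprof m v z i < 0) -> pareto_optimal n m v z ->
  max_weight_support (fun a => - tau a) z -> max_weight_support tau z.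
Proof.
  intros Htau Hneg Hpo Hmin i j k Hi Hj Hk Hzij.
  destruct (Rle_or_lt (tau k * v k j) (tau i * v i j)) as [|Hviol]; auto. exfalso.
  destruct (Nat.eq_dec i k) as [->|Hik]; [lra |].
  destruct (proj1 (util_neg_iff k (z k) Hk (fun c Hc => proj1 (proj1 Hpo) k c Hk Hc))
              (Hneg k Hk)) as [l [Hl Hzkl]].
  pose proof (Hmin k l i Hk Hl Hi Hzkl) as Hkl. cbv beta in Hkl.
  destruct (Nat.eq_dec j l) as [->|Hjl]; [lra |].
  pose proof (pareto_no_improving_swap z i k j l Hpo Hi Hk Hj Hl Hik Hjl Hzij Hzkl) as Hswap.
  pose proof (Hv i j Hi Hj). pose proof (Hv i l Hi Hl).
  pose proof (Htau i Hi). pose proof (Htau k Hk).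
  assert (tau k * (v k j * v i l) < tau k * (v k l * v i j)) by nra.
  nra.
Qed.

(* The gradient of the Nash product at u(z) is -N * tau, so pairing it with
   u(y) - u(z) gives -N times the welfare difference W_tau(y) - W_tau(z). *)
Lemma nash_gradient_welfare b z g y : (forall i, (i < n)%nat -> b i < 0) ->
  (forall i, (i < n)%nat -> uprof m v z i < 0) ->
  (forall i, (i < n)%nat ->
     derivable_pt_lim (fun t => nash n b (upd (uprof m v z) i t)) (uprof m v z i) (g i)) ->
  sumR n (fun i => g i * (uprof m v y i - uprof m v z i)) =
  - nash n b (uprof m v z) * (welfare (budget_weights b z) y - welfare (budget_weights b z) z).
Proof.
  intros Hb Hneg Hg. set (N := nash n b (uprof m v z)).
  transitivity (sumR n (fun i => - N * (budget_weights b z i * uprof m v y i)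
                                + N * (budget_weights b z i * uprof m v z i))).
  - apply sumR_ext. intros i Hi.
    rewrite (uniqueness_limite _ _ _ _ (Hg i Hi) (nash_partial_deriv n b _ i Hi (Hneg i Hi) (Hb i Hi))).
    unfold budget_weights. fold N. ring.
  - rewrite sumR_plus, !sumR_scal. unfold welfare. ring.
Qed.

Lemma welfare_max_critical b z : (0 < n)%nat -> (forall i, (i < n)%nat -> b i < 0) ->
  allocation n m z -> (forall i, (i < n)%nat -> uprof m v z i < 0) ->
  welfare_max (budget_weights b z) z ->
  critical_point n (nash n b) (Uset n m v) (uprof m v z).
Proof.
  intros Hn Hb Hz Hneg Hmax.
  set (g := fun i => - (nash n b (uprof m v z) * budget_weights b z i)).
  assert (Hg : forall i, (i < n)%nat ->
     derivable_pt_lim (fun t => nash n b (upd (uprof m v z) i t)) (uprof m v z i) (g i))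
    by (intros i Hi; apply nash_partial_deriv; auto).
  split; [exists z; split; auto |]. split; auto. exists g. split; [exact Hg | split].
  - exists 0%nat. split; auto. unfold g.
    pose proof (nash_pos n b (uprof m v z)). pose proof (budget_weights_pos b z 0 (Hb _ Hn) (Hneg _ Hn)).
    nra.
  - right. intros w [y [Hy Hw]].
    rewrite (sumR_ext _ _ (fun i => g i * (uprof m v y i - uprof m v z i)))
      by (intros i Hi; rewrite Hw; auto).
    rewrite (nash_gradient_welfare b z g y Hb Hneg Hg).
    pose proof (nash_pos n b (uprof m v z)). pose proof (Hmax y Hy). nra.
Qed.

(* (4) -> (3): the tangent hyperplane of a critical point supports U(v) either
   from above (z maximizes W_tau) or from below (z minimizes W_tau; with
   Pareto optimality the support property, hence maximality, follows). *)
Lemma critical_welfare_max b z : (0 < n)%nat -> (forall i, (i < n)%nat -> b i < 0) ->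
  allocation n m z -> (forall i, (i < n)%nat -> uprof m v z i < 0) ->
  pareto_optimal n m v z -> critical_point n (nash n b) (Uset n m v) (uprof m v z) ->
  welfare_max (budget_weights b z) z.
Proof.
  intros Hn Hb Hz Hneg Hpo [_ [_ [g [Hg [_ Hside]]]]].
  set (tau := budget_weights b z).
  assert (Htau : forall i, (i < n)%nat -> 0 < tau i) by (intros; apply budget_weights_pos; auto).
  assert (Hpair : forall y, allocation n m y ->
            sumR n (fun i => g i * (uprof m v y i - uprof m v z i)) =
            - nash n b (uprof m v z) * (welfare tau y - welfare tau z))
    by (intros; apply nash_gradient_welfare; auto).
  pose proof (nash_pos n b (uprof m v z)) as HN.
  destruct Hside as [Hbelow|Habove].
  - assert (Hmin : welfare_max (fun a => - tau a) z).
    { intros y Hy. rewrite !welfare_opp.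
      specialize (Hbelow _ (ex_intro _ y (conj Hy (fun _ _ => eq_refl)))).
      rewrite Hpair in Hbelow by auto. nra. }
    apply (support_iff_welfare_max tau z Hn Htau Hz).
    apply (pareto_support_flip tau z Htau Hneg Hpo).
    apply welfare_max_support; auto.
  - intros y Hy.
    specialize (Habove _ (ex_intro _ y (conj Hy (fun _ _ => eq_refl)))).
    rewrite Hpair in Habove by auto. nra.
Qed.

End Allocations.

Theorem proposition7 (n m : nat) (v : nat -> nat -> R) (b : nat -> R)
  (z : nat -> nat -> R)
  (Hn : (0 < n)%nat)
  (Hv : forall i j, (i < n)%nat -> (j < m)%nat -> v i j < 0)
  (Hb : forall i, (i < n)%nat -> b i < 0)
  (Hz : allocation n m z) :
  let c1 := competitive n m v b z in
  let neg := forall i, (i < n)%nat -> uprof m v z i < 0 in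
  let c2 := neg /\
    (forall i j, (i < n)%nat -> (j < m)%nat -> z i j > 0 ->
       forall i', (i' < n)%nat ->
         v i j * b i / uprof m v z i >= v i' j * b i' / uprof m v z i') in
  let tau := fun i => b i / uprof m v z i in
  let c3 := neg /\
    (forall y, allocation n m y ->
       sumR n (fun i => tau i * uprof m v y i) <= sumR n (fun i => tau i * uprof m v z i)) in
  let c4 := neg /\ Ustar n m v (uprof m v z) /\
    critical_point n (nash n b) (Uset n m v) (uprof m v z) in
  (c1 <-> c2) /\ (c1 <-> c3) /\ (c1 <-> c4).
Proof.
  cbv zeta.
  pose proof (competitive_iff_support n m v Hv b z Hn Hb Hz) as Hsupport.
  pose proof (competitive_iff_welfare_max n m v Hv b z Hn Hb Hz) as Hwelfare.
  split; [| split].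
  - rewrite Hsupport, support_ratio_form. reflexivity.
  - exact Hwelfare.
  - rewrite Hwelfare. split.
    + intros [Hneg Hmax]. split; [exact Hneg | split].
      * exists z. split; [| auto].
        apply (welfare_max_pareto n m v (budget_weights m v b z)); auto.
        intros i Hi. apply budget_weights_pos; auto.
      * apply (welfare_max_critical n m v); auto.
    + intros [Hneg [Hstar Hcrit]]. split; [exact Hneg |].
      apply (critical_welfare_max n m v); auto. apply pareto_of_profile; auto.
Qed.
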